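(* Let $q_1,q_2$ be integers with $1\le q_1\le q_2$, $A=\begin{pmatrix}3q_1&0\\0&3q_2\end{pmatrix}$, $\mathcal{D}=\left\{\begin{pmatrix}0\\0\end{pmatrix},\begin{pmatrix}1\\0\end{pmatrix},\begin{pmatrix}0\\1\end{pmatrix}\right\}$, and $\mu_{A,\mathcal{D}}$ the associated Sierpiński-type measure. If $\Lambda$ is an orthogonal set of $\mu_{A,\mathcal{D}}$, then $\Lambda$ has at most one point on every horizontal line and at most one point on every vertical line; i.e., any two distinct points of $\Lambda$ differ in both coordinates.
   Context: $\mu_{A,\mathcal{D}}$ is the unique Borel probability measure on $\mathbb{R}^2$ with $\mu_{A,\mathcal{D}}(E)=\frac13\sum_{d\in\mathcal{D}}\mu_{A,\mathcal{D}}(AE-d)$ for Borel $E$. A countable $\Lambda\subseteq\mathbb{R}^2$ is an orthogonal set of $\mu$ if $\{e^{-2\pi i\langle\lambda,x\rangle}:\lambda\in\Lambda\}$ is orthogonal in $L^2(\mu)$. *)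

From HB Require Import structures.
From mathcomp Require Import all_boot all_order all_algebra.
From mathcomp Require Import all_classical all_reals all_analysis.
Set Implicit Arguments. Unset Strict Implicit. Unset Printing Implicit Defensive.
Import Order.TTheory GRing.Theory Num.Theory.
Local Open Scope classical_set_scope.
Local Open Scope ring_scope.

Definition sier_digits (R : realType) : seq (R * R) :=
  [:: (0, 0); (1, 0); (0, 1)].

Definition sier_map (R : realType) (q1 q2 : nat) (d : R * R) (x : R * R) : R * R :=
  ((3 * q1%:R) * x.1 - d.1, (3 * q2%:R) * x.2 - d.2).

(* mu is the Sierpinski-type self-affine measure mu_{A,D}: a Borel probability
   measure on R^2 with mu(E) = 1/3 sum_{d in D} mu(A E - d) for all Borel E.
   (Such a measure is unique.) *)
Definition is_sierpinski_measure (R : realType) (q1 q2 : nat)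
    (mu : probability (R * R)%type R) : Prop :=
  forall E : set (R * R), measurable E ->
    (mu E = ((3%:R : R)^-1)%:E * \sum_(d <- sier_digits R) mu (sier_map q1 q2 d @` E))%E.

Definition dotR2 (R : realType) (u v : R * R) : R := u.1 * v.1 + u.2 * v.2.

(* <e_l, e_l'>_{L^2(mu)} = \int e^{-2 pi i <l - l', x>} dmu(x); it vanishes
   iff both its real part and imaginary part vanish. *)
Definition exp_orthogonal (R : realType) (mu : probability (R * R)%type R)
    (l l' : R * R) : Prop :=
  (\int[mu]_x (cos (2 * pi * dotR2 (l - l') x))%:E = 0)%E /\
  (\int[mu]_x (sin (2 * pi * dotR2 (l - l') x))%:E = 0)%E.

Definition orthogonal_set (R : realType) (mu : probability (R * R)%type R)
    (Lam : set (R * R)) : Prop :=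
  countable Lam /\
  forall l l', Lam l -> Lam l' -> l <> l' -> exp_orthogonal mu l l'.

From HB Require Import structures.
From mathcomp Require Import all_boot all_order all_algebra.
From mathcomp Require Import all_classical all_reals all_analysis.
From mathcomp Require Import measurable_realfun ring lra.
Set Implicit Arguments. Unset Strict Implicit. Unset Printing Implicit Defensive.
Import Order.TTheory GRing.Theory Num.Theory.
Import numFieldNormedType.Exports.
Local Open Scope classical_set_scope.
Local Open Scope ring_scope.

(* Let phi(k) = \int e^{i k y} dnu(y) be the Fourier transform of the law nu
   of one coordinate under mu, and b = 3 q the corresponding scale.  The
   self-similarity of mu gives phi(k b) = m(k) phi(k) with
   m(k) = (2 + e^{ik}) / 3, which never vanishes.  Hence a zero of phi at k
   propagates to every k b^-n; but k b^-n -> 0 and phi is continuous with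
   phi(0) = 1.  When l and l' share one coordinate, the orthogonality of e_l
   and e_l' says exactly that phi vanishes at 2 pi times the difference of the
   other coordinates. *)

Lemma finite_measure_integrable_bounded d (T : measurableType d) (R : realType)
    (mu : {finite_measure set T -> \bar R}) (h : T -> R) (M : R) :
  measurable_fun setT h -> (forall x, `|h x| <= M) ->
  mu.-integrable setT (EFin \o h).
Proof.
move=> mh hM.
apply: (le_integrable measurableT _ _ (finite_measure_integrable_cst mu M measurableT)).
  exact/measurable_EFinP.
by move=> x _; rewrite /= lee_fin (le_trans (hM x)) ?ler_norm.
Qed.

Lemma EFin_Rintegral d (T : measurableType d) (R : realType)
    (mu : {measure set T -> \bar R}) (D : set T) (f : T -> R) :
  measurable D -> mu.-integrable D (EFin \o f) ->
  (\int[mu]_(x in D) f x)%:E = (\int[mu]_(x in D) (f x)%:E)%E.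
Proof. by move=> mD /(integrable_fin_num mD)/fineK. Qed.

Lemma measurable_cos_scale d (T : measurableType d) (R : realType) (f : T -> R) (k : R) :
  measurable_fun setT f -> measurable_fun setT (fun x => cos (k * f x)).
Proof.
move=> mf; apply: measurableT_comp (continuous_measurable_fun (@continuous_cos R)) _.
exact: measurable_funM.
Qed.

Lemma measurable_sin_scale d (T : measurableType d) (R : realType) (f : T -> R) (k : R) :
  measurable_fun setT f -> measurable_fun setT (fun x => sin (k * f x)).
Proof.
move=> mf; apply: measurableT_comp (continuous_measurable_fun (@continuous_sin R)) _.
exact: measurable_funM.
Qed.

Lemma probability_RintegralDr d (T : measurableType d) (R : realType)
    (mu : probability T R) (h : T -> R) (M c : R) :
  measurable_fun setT h -> (forall x, `|h x| <= M) ->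
  \int[mu]_x (h x + c) = \int[mu]_x h x + c.
Proof.
move=> mh hM; rewrite RintegralD //; last 2 first.
- exact: finite_measure_integrable_bounded mh hM.
- exact: finite_measure_integrable_cst.
have mu1 : fine (mu setT) = 1 by rewrite probability_setT.
by rewrite Rintegral_cst // mu1 mulr1.
Qed.

Definition sier_inv {R : realType} (q1 q2 : nat) (d x : R * R) : R * R :=
  ((x.1 + d.1) / (3 * q1%:R), (x.2 + d.2) / (3 * q2%:R)).

Lemma sier_scale_gt1 (R : realType) (q : nat) : (0 < q)%N -> 1 < 3 * q%:R :> R.
Proof. move=> q_gt0; have : 1 <= q%:R :> R by rewrite ler1n. lra. Qed.

Lemma measurable_sier_inv {R : realType} (q1 q2 : nat) (d : R * R) :
  measurable_fun setT (sier_inv q1 q2 d).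
Proof.
have maff (c k : R) : measurable_fun setT (fun y : R => (y + c) / k).
  by apply: measurable_funM => //; exact: measurable_funD.
apply: measurable_fun_pair.
- exact: measurableT_comp (maff _ _) measurable_fst.
- exact: measurableT_comp (maff _ _) measurable_snd.
Qed.

Section sierpinski_measure.
Context (R : realType) (q1 q2 : nat).
Hypotheses (q1_gt0 : (0 < q1)%N) (q2_gt0 : (0 < q2)%N).

Let scale1_neq0 : 3 * q1%:R != 0 :> R.
Proof. by rewrite gt_eqF // (lt_trans ltr01) // sier_scale_gt1. Qed.

Let scale2_neq0 : 3 * q2%:R != 0 :> R.
Proof. by rewrite gt_eqF // (lt_trans ltr01) // sier_scale_gt1. Qed.

Lemma sier_mapK (d : R * R) : cancel (sier_map q1 q2 d) (sier_inv q1 q2 d).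
Proof.
by case=> x1 x2; rewrite /sier_inv /= !subrK ![_ * x1]mulrC ![_ * x2]mulrC !mulfK.
Qed.

Lemma sier_invK (d : R * R) : cancel (sier_inv q1 q2 d) (sier_map q1 q2 d).
Proof.
by case=> x1 x2; rewrite /sier_map /= [3 * q1%:R * _]mulrC [3 * q2%:R * _]mulrC !divfK // !addrK.
Qed.

Lemma image_sier_map (d : R * R) (E : set (R * R)) :
  sier_map q1 q2 d @` E = sier_inv q1 q2 d @^-1` E.
Proof.
apply/seteqP; split => [_ [x Ex <-]|y Ey]; first by rewrite /= sier_mapK.
by exists (sier_inv q1 q2 d y); rewrite ?sier_invK.
Qed.

Variable mu : probability (R * R)%type R.
Hypothesis mu_sier : is_sierpinski_measure q1 q2 mu.

(* The measure structure of a pushforward depends on a measurability proof,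
   which cannot be inferred. *)
Let push (d : R * R) : {measure set (R * R) -> \bar R}.
Proof. refine (pushforward mu (sier_inv q1 q2 d)); exact: measurable_sier_inv. Defined.

Let mixture := mscale ((3 : R)^-1)%:nng
  (measure_add (push (0, 0)) (measure_add (push (1, 0)) (push (0, 1)))).

Let sierpinski_mixture A : measurable A -> mu A = mixture A.
Proof.
move=> mA; rewrite mu_sier //; congr (_ * _)%E.
rewrite [RHS]measure_addE [X in (_ + X)%E]measure_addE.
by rewrite /sier_digits !big_cons big_nil adde0 !image_sier_map.
Qed.

Lemma sierpinski_integral_ge0 (f : R * R -> \bar R) :
  measurable_fun setT f -> (forall x, 0 <= f x)%E ->
  (\int[mu]_x f x =
   (3^-1)%:E * \sum_(d <- sier_digits R) \int[mu]_x f (sier_inv q1 q2 d x))%E.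
Proof.
move=> mf f_ge0.
rewrite (eq_measure_integral mixture) => [|A mA _]; last exact: sierpinski_mixture.
rewrite ge0_integral_mscale // !ge0_integral_measure_add //.
by rewrite !ge0_integral_pushforward ?big_cons ?big_nil ?adde0 //; exact: measurable_sier_inv.
Qed.

Lemma sierpinski_Rintegral (h : R * R -> R) (M : R) :
  measurable_fun setT h -> (forall x, `|h x| <= M) ->
  \int[mu]_x h x = 3^-1 * \sum_(d <- sier_digits R) \int[mu]_x h (sier_inv q1 q2 d x).
Proof.
move=> mh hM.
have shiftE (g : R * R -> R) : measurable_fun setT g -> (forall x, `|g x| <= M) ->
    (\int[mu]_x (g x + M)%:E = (\int[mu]_x g x + M)%:E)%E.
  move=> mg gM; rewrite -(probability_RintegralDr _ _ mg gM) EFin_Rintegral //.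
  have gM2 x : `|g x + M| <= M + M.
    have M_ge0 : 0 <= M := le_trans (normr_ge0 _) (gM x).
    by rewrite (le_trans (ler_normD _ _)) // lerD ?gM // ger0_norm.
  exact: finite_measure_integrable_bounded (measurable_funD mg (measurable_cst M)) gM2.
have f_ge0 x : (0 <= (h x + M)%:E)%E.
  by move: (hM x); rewrite lee_fin ler_norml => /andP[hxM _]; lra.
have mhd d : measurable_fun setT (fun x => h (sier_inv q1 q2 d x)).
  exact: measurableT_comp mh (measurable_sier_inv q1 q2 d).
have mhM : measurable_fun setT (fun x => (h x + M)%:E).
  by apply/measurable_EFinP; exact: measurable_funD mh (measurable_cst M).
have := sierpinski_integral_ge0 mhM f_ge0.
rewrite /sier_digits !big_cons !big_nil adde0 addr0 !shiftE //.
by rewrite -!EFinD -EFinM => -[]; lra.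
Qed.

Lemma sierpinski_Rintegral_fst (g : R -> R) (M : R) :
  measurable_fun setT g -> (forall y, `|g y| <= M) ->
  \int[mu]_x g x.1 = 3^-1 * (2 * \int[mu]_x g (x.1 / (3 * q1%:R)) +
                              \int[mu]_x g ((x.1 + 1) / (3 * q1%:R))).
Proof.
move=> mg gM.
rewrite (sierpinski_Rintegral (measurableT_comp mg measurable_fst) (fun x => gM x.1)).
have drop0 : \int[mu]_x g ((x.1 + 0) / (3 * q1%:R)) = \int[mu]_x g (x.1 / (3 * q1%:R)).
  by apply: eq_Rintegral => x _; rewrite addr0.
rewrite /sier_digits !big_cons big_nil /sier_inv /= !drop0; lra.
Qed.

Lemma sierpinski_Rintegral_snd (g : R -> R) (M : R) :
  measurable_fun setT g -> (forall y, `|g y| <= M) ->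
  \int[mu]_x g x.2 = 3^-1 * (2 * \int[mu]_x g (x.2 / (3 * q2%:R)) +
                              \int[mu]_x g ((x.2 + 1) / (3 * q2%:R))).
Proof.
move=> mg gM.
rewrite (sierpinski_Rintegral (measurableT_comp mg measurable_snd) (fun x => gM x.2)).
have drop0 : \int[mu]_x g ((x.2 + 0) / (3 * q2%:R)) = \int[mu]_x g (x.2 / (3 * q2%:R)).
  by apply: eq_Rintegral => x _; rewrite addr0.
rewrite /sier_digits !big_cons big_nil /sier_inv /= !drop0; lra.
Qed.

End sierpinski_measure.

Definition fourier_zero d (T : measurableType d) (R : realType)
    (mu : {measure set T -> \bar R}) (p : T -> R) (k : R) : Prop :=
  \int[mu]_x cos (k * p x) = 0 /\ \int[mu]_x sin (k * p x) = 0.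

Section fourier_transform.
Context d (T : measurableType d) (R : realType) (mu : probability T R) (p : T -> R).
Hypothesis mp : measurable_fun setT p.

Lemma cvg_Rintegral_cos (t : R^nat) : t @ \oo --> 0 ->
  \int[mu]_x cos (t n * p x) @[n --> \oo] --> (1 : R).
Proof.
move=> t0; apply: (@fine_cvg _ _ _ _ (fun n => \int[mu]_x (cos (t n * p x))%:E)%E).
have -> : (1%:E = \int[mu]_x (cst 1%:E) x)%E.
  by rewrite integral_cst // mul1e; apply/esym/probability_setT.
apply: (@dominated_cvg _ _ _ mu setT measurableT _ _ (cst 1%:E)) => //.
- by move=> n; apply/measurable_EFinP; exact: measurable_cos_scale.
- move=> x _; apply: cvg_EFin; first exact: nearW.
  have := cvg_comp _ _ (cvgMr_tmp (b := p x) t0) (@continuous_cos R (0 * p x)).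
  by rewrite mul0r cos0; apply.
- exact: finite_measure_integrable_cst.
- by move=> n x _; rewrite /= lee_fin cos_max.
Qed.
End fourier_transform.

Section self_similar_law.
Context d (T : measurableType d) (R : realType) (mu : probability T R).
Variables (p : T -> R) (b : R).
Hypotheses (mp : measurable_fun setT p) (b_gt1 : 1 < b).
Hypothesis p_self_similar : forall (g : R -> R) (M : R),
  measurable_fun setT g -> (forall y, `|g y| <= M) ->
  \int[mu]_x g (p x) = 3^-1 * (2 * \int[mu]_x g (p x / b) + \int[mu]_x g ((p x + 1) / b)).

Local Notation C k := (\int[mu]_x cos (k * p x)).
Local Notation S k := (\int[mu]_x sin (k * p x)).

Let b_neq0 : b != 0. Proof. by rewrite gt_eqF // (lt_trans ltr01). Qed.

Let Rintegral_cos_sin (k u v : R) :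
  \int[mu]_x (u * cos (k * p x) + v * sin (k * p x)) = u * C k + v * S k.
Proof.
have icos := finite_measure_integrable_bounded mu (measurable_cos_scale k mp)
  (fun x => cos_max _).
have isin := finite_measure_integrable_bounded mu (measurable_sin_scale k mp)
  (fun x => sin_max _).
rewrite RintegralD ?RintegralZl //.
- by apply: (eq_integrable measurableT _ _ _ (integrableZl measurableT u icos)).
- by apply: (eq_integrable measurableT _ _ _ (integrableZl measurableT v isin)).
Qed.

Lemma fourier_rescale k :
  C (k * b) = 3^-1 * ((2 + cos k) * C k - sin k * S k) /\
  S (k * b) = 3^-1 * (sin k * C k + (2 + cos k) * S k).
Proof.
have scale_down x : k * b * (p x / b) = k * p x by field.
have scale_shift x : k * b * ((p x + 1) / b) = k * p x + k by field.
have mid : measurable_fun setT (@id R) := @measurable_id _ R setT.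
split.
- have E1 : \int[mu]_x cos (k * b * (p x / b)) = C k.
    by apply: eq_Rintegral => x _; rewrite scale_down.
  have E2 : \int[mu]_x cos (k * b * ((p x + 1) / b)) = cos k * C k + - sin k * S k.
    by rewrite -Rintegral_cos_sin; apply: eq_Rintegral => x _; rewrite scale_shift cosD; ring.
  rewrite (p_self_similar (measurable_cos_scale (k * b) mid) (fun=> cos_max _)) E1 E2; ring.
- have E1 : \int[mu]_x sin (k * b * (p x / b)) = S k.
    by apply: eq_Rintegral => x _; rewrite scale_down.
  have E2 : \int[mu]_x sin (k * b * ((p x + 1) / b)) = sin k * C k + cos k * S k.
    by rewrite -Rintegral_cos_sin; apply: eq_Rintegral => x _; rewrite scale_shift sinD; ring.
  rewrite (p_self_similar (measurable_sin_scale (k * b) mid) (fun=> sin_max _)) E1 E2; ring.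
Qed.

Lemma fourier_zero_rescale k : fourier_zero mu p (k * b) -> fourier_zero mu p k.
Proof.
case=> C0 S0; have [] := fourier_rescale k; rewrite C0 S0.
have := cos_geN1 k; set c := cos k; set s := sin k; set x := C k; set y := S k.
move=> c_geN1 Ex Ey.
have {}Ex : (2 + c) * x - s * y = 0 by lra.
have {}Ey : s * x + (2 + c) * y = 0 by lra.
(* (2 + c) + i s = 2 + e^{ik} does not vanish. *)
have det_neq0 : (2 + c) ^+ 2 + s ^+ 2 != 0 by rewrite gt_eqF //; nra.
have det_x : ((2 + c) ^+ 2 + s ^+ 2) * x =
    (2 + c) * ((2 + c) * x - s * y) + s * (s * x + (2 + c) * y) by ring.
have det_y : ((2 + c) ^+ 2 + s ^+ 2) * y =
    (2 + c) * (s * x + (2 + c) * y) - s * ((2 + c) * x - s * y) by ring.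
rewrite Ex Ey !mulr0 addr0 subr0 in det_x det_y.
by split; [move/eqP: det_x | move/eqP: det_y]; rewrite mulf_eq0 (negbTE det_neq0) => /eqP.
Qed.

Lemma fourier_zero_scale_pow k n :
  fourier_zero mu p k -> fourier_zero mu p (k * b^-1 ^+ n).
Proof.
move=> k0; elim: n => [|n IH]; first by rewrite expr0 mulr1.
by apply: fourier_zero_rescale; rewrite exprSr mulrA mulfVK.
Qed.

Lemma not_fourier_zero k : ~ fourier_zero mu p k.
Proof.
move=> k0.
have b_inv_lt1 : `|b^-1| < 1.
  by rewrite ger0_norm ?invf_lt1 ?invr_ge0 ?ltW // (lt_trans ltr01).
have t0 : k * b^-1 ^+ n @[n --> \oo] --> 0.
  by rewrite -(mulr0 k); apply: cvgMl_tmp; exact: cvg_expr.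
have vanish : (fun n => \int[mu]_x cos (k * b^-1 ^+ n * p x)) = cst 0.
  by apply/funext => n; case: (fourier_zero_scale_pow n k0).
have cvg1 : cst 0 @ \oo --> (1 : R) by rewrite -vanish; exact: cvg_Rintegral_cos.
have one_eq0 : (1 : R) = 0 := cvg_unique (@Rhausdorff R) cvg1 (cvg_cst 0).
by move: (@oner_neq0 R); rewrite one_eq0 eqxx.
Qed.
End self_similar_law.

Section orthogonality.
Context (R : realType) (mu : probability (R * R)%type R) (l l' : R * R).

Lemma exp_orthogonal_fourier_zero_snd :
  l.1 = l'.1 -> exp_orthogonal mu l l' -> fourier_zero mu snd (2 * pi * (l.2 - l'.2)).
Proof.
move=> l1E [C0 S0].
have dotE x : 2 * pi * dotR2 (l - l') x = 2 * pi * (l.2 - l'.2) * x.2.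
  by rewrite /dotR2 /= l1E subrr mul0r add0r mulrA.
by split; rewrite /Rintegral; under eq_integral do rewrite -dotE; rewrite ?C0 ?S0.
Qed.

Lemma exp_orthogonal_fourier_zero_fst :
  l.2 = l'.2 -> exp_orthogonal mu l l' -> fourier_zero mu fst (2 * pi * (l.1 - l'.1)).
Proof.
move=> l2E [C0 S0].
have dotE x : 2 * pi * dotR2 (l - l') x = 2 * pi * (l.1 - l'.1) * x.1.
  by rewrite /dotR2 /= l2E subrr mul0r addr0 mulrA.
by split; rewrite /Rintegral; under eq_integral do rewrite -dotE; rewrite ?C0 ?S0.
Qed.
End orthogonality.

Theorem proposition4p1 (R : realType) (q1 q2 : nat)
    (mu : probability (R * R)%type R) (Lam : set (R * R)) :
  (1 <= q1)%N -> (q1 <= q2)%N ->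
  is_sierpinski_measure q1 q2 mu ->
  orthogonal_set mu Lam ->
  forall l l', Lam l -> Lam l' -> l <> l' -> l.1 <> l'.1 /\ l.2 <> l'.2.
Proof.
move=> q1_gt0 q12 mu_sier [_ orth] l l' Ll Ll' ll'.
have q2_gt0 : (0 < q2)%N := leq_trans q1_gt0 q12.
have {}orth := orth l l' Ll Ll' ll'.
split=> [l1E|l2E].
- apply: (not_fourier_zero measurable_snd (sier_scale_gt1 R q2_gt0)
    (sierpinski_Rintegral_snd q1_gt0 q2_gt0 mu_sier)).
  exact: exp_orthogonal_fourier_zero_snd l1E orth.
- apply: (not_fourier_zero measurable_fst (sier_scale_gt1 R q1_gt0)
    (sierpinski_Rintegral_fst q1_gt0 q2_gt0 mu_sier)).
  exact: exp_orthogonal_fourier_zero_fst l2E orth.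
Qed.
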